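(* For every permutation $w\in S_n$, $$|B(w)|+|C(w)|-1 \le |R(w)| \le |B(w)|\cdot|C(w)|.$$
   Context: $S_n$ is generated by the adjacent transpositions $s_1,\dots,s_{n-1}$. A reduced word for $w$ is a word $i_1\cdots i_k$ with $w=s_{i_1}\cdots s_{i_k}$ and $k$ minimal; $R(w)$ is the set of reduced words. A braid move replaces a factor (consecutive letters) $i(i+1)i$ by $(i+1)i(i+1)$ or vice versa; a commutation move replaces a factor $ij$ with $|i-j|>1$ by $ji$. $B(w)$ (resp. $C(w)$) is the set of equivalence classes of $R(w)$ under sequences of braid moves (resp. commutation moves), called braid classes (resp. commutation classes). *)

(* Symmetric group S_n = {perm 'I_n}; letter i (1 <= i <= n-1)
   is the ordinal i : 'I_n with 0 < i, and s_i swaps (i-1) and i (0-based). *)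
From Stdlib Require Import ClassicalEpsilon Relations.
From mathcomp Require Import all_boot fingroup perm.

Set Implicit Arguments.
Unset Strict Implicit.
Unset Printing Implicit Defensive.

Local Open Scope group_scope.

Definition pbool (P : Prop) : bool :=
  if excluded_middle_informative P then true else false.

(* adjacent transposition s_i, i in 1..n-1 ; s_0 is unused (identity) *)
Definition adj_tr n (i : 'I_n) : {perm 'I_n} :=
  if 0 < i then tperm (Ordinal (leq_ltn_trans (leq_pred i) (ltn_ord i))) i
  else 1.

Definition valid_word n (t : seq 'I_n) : bool := all (fun i : 'I_n => 0 < i) t.

Definition word_prod n (t : seq 'I_n) : {perm 'I_n} := \prod_(i <- t) adj_tr i.

Definition has_word_of_length n (w : {perm 'I_n}) : pred nat :=
  fun k => [exists t : k.-tuple 'I_n, valid_word t && (word_prod t == w)].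

Definition perm_length n (w : {perm 'I_n}) : nat :=
  match excluded_middle_informative (exists k, has_word_of_length w k) with
  | left h => ex_minn h
  | right _ => 0%N
  end.

Definition reduced_words n (w : {perm 'I_n}) : {set (perm_length w).-tuple 'I_n} :=
  [set t : (perm_length w).-tuple 'I_n | valid_word t && (word_prod t == w)].

Definition braid_move (u v : seq nat) : Prop :=
  exists (a b : seq nat) (i : nat),
    (u = a ++ [:: i; i.+1; i] ++ b /\ v = a ++ [:: i.+1; i; i.+1] ++ b) \/
    (u = a ++ [:: i.+1; i; i.+1] ++ b /\ v = a ++ [:: i; i.+1; i] ++ b).

Definition comm_move (u v : seq nat) : Prop :=
  exists (a b : seq nat) (i j : nat),
    (i.+1 < j \/ j.+1 < i) /\ u = a ++ [:: i; j] ++ b /\ v = a ++ [:: j; i] ++ b.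

Definition move_classes (mv : seq nat -> seq nat -> Prop) n (w : {perm 'I_n})
  : {set {set (perm_length w).-tuple 'I_n}} :=
  [set [set u in reduced_words w |
          pbool (clos_refl_sym_trans _ mv (map val t) (map val u))]
   | t : (perm_length w).-tuple 'I_n in reduced_words w].

Definition braid_classes n (w : {perm 'I_n}) := move_classes braid_move w.
Definition comm_classes n (w : {perm 'I_n}) := move_classes comm_move w.

From Stdlib Require Import ClassicalEpsilon Relations.
From mathcomp Require Import all_boot fingroup perm zify.

Set Implicit Arguments.
Unset Strict Implicit.
Unset Printing Implicit Defensive.

(* The length of w is its number of inversions, and along a reduced word each
   letter creates a new inversion.  Listing these inversions in order gives the
   inversion sequence of the word, which has no repetition and determines the
   word.  A braid move reverses three consecutive, pairwise incident inversions;
   a commutation move swaps two consecutive disjoint ones.  Hence braid moves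
   keep the relative order of disjoint inversions and commutation moves that of
   incident ones, so a reduced word is determined by its braid class and its
   commutation class: |R(w)| <= |B(w)| |C(w)|.
   By Matsumoto's theorem the moves connect R(w).  Enumerate R(w) so that each
   word is one move away from an earlier one: each new word shares its braid or
   its commutation class with an earlier word, so it opens at most one new
   class, and |B(w)| + |C(w)| <= |R(w)| + 1. *)

Definition nswap (a x : nat) : nat :=
  if x == a.-1 then a else if x == a then a.-1 else x.

Ltac nswap_cases :=
  rewrite /nswap; repeat match goal with
  | |- context [if ?x == ?y then _ else _] =>
      lazymatch x with context [if _ then _ else _] => fail | _ =>
        case: (@eqP _ x y) => ? end
  end.

Ltac nswap_lia := nswap_cases; lia.

Lemma nswap_mono a x y : 0 < a -> x <> y ->
    ~ (x = a.-1 /\ y = a) -> ~ (x = a /\ y = a.-1) ->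
  (nswap a x < nswap a y) = (x < y).
Proof. by move=> a0 nxy h1 h2; nswap_cases; apply/idP/idP; lia. Qed.

Lemma nswap_self a : nswap a a = a.-1.
Proof. by nswap_lia. Qed.

Lemma nswap_pred a : nswap a a.-1 = a.
Proof. by rewrite /nswap eqxx. Qed.

Lemma nswap_far a b : a.+1 < b \/ b.+1 < a -> nswap a b = b /\ nswap a b.-1 = b.-1.
Proof. by move=> hab; split; nswap_lia. Qed.

Lemma adj_trE n (i x : 'I_n) : val (adj_tr i x) = nswap i x.
Proof.
rewrite /adj_tr; case: ifP => [i0|].
  case: tpermP => [->|->|] /=; [nswap_lia | nswap_lia |].
  by move=> /eqP/negbTE + /eqP/negbTE; rewrite /nswap -!val_eqE /= => -> ->.
by rewrite perm1 /nswap; case: (val i) => //= _; case: eqP.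
Qed.

Section RelativeOrder.
Variable T : eqType.
Implicit Types (s t X W Y : seq T) (P : rel T).

Definition before s x y := index x s < index y s.

Definition same_order P s t :=
  perm_eq s t /\ forall x y, P x y -> before s x y = before t x y.

Lemma same_order_refl P s : same_order P s s.
Proof. by []. Qed.

Lemma same_order_sym P s t : same_order P s t -> same_order P t s.
Proof. by case=> st hst; split=> [|x y /hst ->]; rewrite 1?perm_sym. Qed.

Lemma same_order_trans P s t r : same_order P s t -> same_order P t r -> same_order P s r.
Proof.
by case=> st hst [tr htr]; split=> [|x y hP]; [exact: perm_trans st tr | rewrite hst ?htr].
Qed.

Lemma same_order_equiv P : equivalence (seq T) (same_order P).
Proof.
by split; [exact: same_order_refl | exact: same_order_trans | exact: same_order_sym].
Qed.

Lemma before_cat_perm X W (W' : seq T) Y x y :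
  perm_eq W W' -> ~~ ((x \in W) && (y \in W)) ->
  before (X ++ W ++ Y) x y = before (X ++ W' ++ Y) x y.
Proof.
move=> hW; have hm := perm_mem hW; have hs := perm_size hW.
rewrite /before !index_cat !hm hs => hn.
have := index_mem x W; have := index_mem x W'; have := index_mem y W.
have := index_mem y W'; have := index_mem x X; have := index_mem y X.
rewrite !hm hs; move: hn.
by case: (x \in X); case: (y \in X); case: (x \in W'); case: (y \in W') => //= *;
  apply/idP/idP; lia.
Qed.

Lemma same_order_cat_rev P X W Y : {in W &, forall x y, P x y -> x = y} ->
  same_order P (X ++ W ++ Y) (X ++ rev W ++ Y).
Proof.
move=> hW; split; first by rewrite perm_cat2l perm_cat2r perm_sym perm_rev.
move=> x y hP; have [<-|nxy] := eqVneq x y; first by rewrite /before !ltnn.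
apply: before_cat_perm; first by rewrite perm_sym perm_rev.
by apply/negP => /andP[hx hy]; case/eqP: nxy; exact: hW.
Qed.

Lemma eq_from_before s t : uniq s -> uniq t -> s =i t ->
  (forall x y, before s x y = before t x y) -> s = t.
Proof.
elim: s t => [|x s IH] [|y t] //=.
- by move=> _ _ /(_ y); rewrite inE eqxx.
- by move=> _ _ /(_ x); rewrite inE eqxx.
case/andP=> xs us /andP[yt ut] hm hb.
have exy : x = y.
  apply/eqP; apply: contraT => nxy; have := hb y x.
  by rewrite /before /= !eqxx (negbTE nxy) eq_sym (negbTE nxy).
subst y; have hm' : s =i t.
  move=> z; have := hm z; rewrite !inE; case: eqVneq => [->|] //=.
  by rewrite (negbTE xs) (negbTE yt).
congr (_ :: _); apply: IH => // a b; have := hb a b; rewrite /before /=.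
case: (x =P a) => [<-|na]; case: (x =P b) => [<-|nb] //=.
- by rewrite !ltnn.
- by move=> _; rewrite (memNindex xs) (memNindex yt) !ltnNge !index_size.
- by move=> _; rewrite (memNindex xs) (memNindex yt) !index_mem hm'.
Qed.

End RelativeOrder.

Section Closure.
Variables (A : Type) (R : relation A).
Local Notation crst := (clos_refl_sym_trans A R).

Lemma crst_invariant (P : A -> Prop) : (forall x y, R x y -> P x <-> P y) ->
  forall x y, crst x y -> P x <-> P y.
Proof. by move=> hP x y; elim=> {x y} [x y /hP|x|x y _|x y z _ + _]; tauto. Qed.

Lemma crst_equiv_ind (B : Type) (P : A -> Prop) (Q : relation B) (f : A -> B) :
  (forall x y, R x y -> P x <-> P y) -> equivalence B Q ->
  (forall x y, R x y -> P x -> Q (f x) (f y)) ->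
  forall x y, crst x y -> P x -> Q (f x) (f y).
Proof.
move=> hP [Qrefl Qtrans Qsym] hR x y.
elim=> {x y} [x y /hR //|x _|x y hxy IH Py|x y z hxy IH1 _ IH2 Px].
- exact: Qrefl.
- by apply/Qsym/IH; apply/(crst_invariant hP hxy).
- by apply: Qtrans (IH1 Px) (IH2 _); apply/(crst_invariant hP hxy).
Qed.

Lemma crst_cut (Q : pred A) x y : crst x y -> Q x -> ~~ Q y ->
  exists c d, [/\ Q c, ~~ Q d & R c d \/ R d c].
Proof.
move=> h; elim: h Q => {x y} [x y hxy|x|x y _ IH|x y z _ IH1 _ IH2] Q Qx nQy.
- by exists x, y; split=> //; left.
- by rewrite Qx in nQy.
- have [c [d [nQc nnQd hcd]]] := IH (predC Q) nQy ltac:(by rewrite /= Qx).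
  by exists d, c; split; [exact: negbNE | exact: nQc | tauto].
- case Qy: (Q y); [exact: IH2 | exact: IH1 Q Qx (negbT Qy)].
Qed.

Lemma crst_map (B : Type) (R' : relation B) (f : A -> B) :
  (forall x y, R x y -> R' (f x) (f y)) ->
  forall x y, crst x y -> clos_refl_sym_trans B R' (f x) (f y).
Proof.
move=> hf x y; elim=> {x y} [x y /hf|x|x y _|x y z _ h1 _ h2].
- exact: rst_step.
- exact: rst_refl.
- exact: rst_sym.
- exact: rst_trans h1 h2.
Qed.

End Closure.

Section ImsetPairs.
Variables (T aT bT : finType) (f : T -> aT) (g : T -> bT) (R : {set T}).

Lemma card_le_imset_mul : {in R &, forall x y, f x = f y -> g x = g y -> x = y} ->
  #|R| <= #|f @: R| * #|g @: R|.
Proof.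
move=> inj; have injfg : {in R &, injective (fun x => (f x, g x))}.
  by move=> x y hx hy [ef eg]; exact: inj.
rewrite -(card_in_imset injfg) -cardsX; apply: subset_leq_card.
by apply/subsetP => _ /imsetP[x hx ->]; rewrite in_setX !imset_f.
Qed.

Lemma card_imset_add_le :
  (forall S : {set T}, S \proper R -> S != set0 ->
     exists2 x, x \in S & exists2 y, y \in R :\: S & f x = f y \/ g x = g y) ->
  #|f @: R| + #|g @: R| <= #|R|.+1.
Proof.
move=> cut; have [->|[x0 Rx0]] := set_0Vmem R; first by rewrite !imset0 !cards0.
suff grow (S : {set T}) : S \subset R -> x0 \in S -> #|f @: S| + #|g @: S| <= #|S|.+1 ->
    #|f @: R| + #|g @: R| <= #|R|.+1.
  by apply: (grow [set x0]); rewrite ?sub1set ?set11 // !imset_set1 !cards1.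
have [k] := ubnP (#|R| - #|S|); elim: k S => // k IH S hk sSR Sx0 hS.
have [<-//|nSR] := eqVneq S R.
have pSR : S \proper R by rewrite properEneq nSR sSR.
have nS0 : S != set0 by apply/set0Pn; exists x0.
have [x Sx [y /setDP[Ry nSy] hxy]] := cut S pSR nS0.
apply: (IH (y |: S)).
- by have := proper_card pSR; rewrite cardsU1 nSy; lia.
- by rewrite subUset sub1set Ry sSR.
- by rewrite !inE Sx0 orbT.
- rewrite !imsetU1 !cardsU1 nSy.
  by case: hxy => e; [rewrite -e (imset_f f Sx) | rewrite -e (imset_f g Sx)]; lia.
Qed.

End ImsetPairs.

Lemma pboolP (P : Prop) : reflect P (pbool P).
Proof. by rewrite /pbool; case: excluded_middle_informative => h; constructor. Qed.

Local Notation moves R := (clos_refl_sym_trans (seq nat) R).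

Definition incident (x y : nat * nat) :=
  [|| x.1 == y.1, x.1 == y.2, x.2 == y.1 | x.2 == y.2].

Definition move (u v : seq nat) := braid_move u v \/ comm_move u v.

Lemma braid_move_sym (u v : seq nat) : braid_move u v -> braid_move v u.
Proof. by case=> X [Y [i [h|h]]]; exists X, Y, i; [right|left]; case: h => -> ->. Qed.

Lemma comm_move_sym (u v : seq nat) : comm_move u v -> comm_move v u.
Proof. by case=> X [Y [i [j [h [-> ->]]]]]; exists X, Y, j, i; split=> //; lia. Qed.

Lemma move_sym (u v : seq nat) : move u v -> move v u.
Proof. by case=> h; [left; apply: braid_move_sym | right; apply: comm_move_sym]. Qed.

Lemma move_rcons (u v : seq nat) (a : nat) : move u v -> move (rcons u a) (rcons v a).
Proof.
case=> [[X [Y [i h]]]|[X [Y [i [j [hij [-> ->]]]]]]].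
- by left; exists X, (rcons Y a), i; case: h => -[-> ->]; [left|right]; rewrite !rcons_cat.
- by right; exists X, (rcons Y a), i, j; rewrite !rcons_cat.
Qed.

Lemma move_mem (u v : seq nat) : move u v -> u =i v.
Proof.
case=> [[X [Y [i [[-> ->]|[-> ->]]]]]|[X [Y [i [j [_ [-> ->]]]]]]] x; rewrite !mem_cat !inE.
1, 2: by case: (x == i); case: (x == i.+1); rewrite ?orbT.
by case: (x == i); case: (x == j); rewrite ?orbT.
Qed.

Lemma move_size (u v : seq nat) : move u v -> size u = size v.
Proof.
by case=> [[X [Y [i [[-> ->]|[-> ->]]]]]|[X [Y [i [j [_ [-> ->]]]]]]]; rewrite !size_cat.
Qed.

Section Permutations.
Variable n : nat.
Local Open Scope group_scope.
Implicit Types (p q w : {perm 'I_n}) (a : nat) (u v : seq nat).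

(* Permutations act on all of nat, fixing every x >= n, so that letters and
   positions are plain naturals. *)
Definition pact p x : nat := if insub x is Some o then val (p o) else x.
Definition preim p : nat -> nat := pact p^-1.

Lemma pact_ord p (o : 'I_n) : pact p o = p o.
Proof. by rewrite /pact valK. Qed.

Lemma pact_out p x : n <= x -> pact p x = x.
Proof. by move=> hx; rewrite /pact insubF // ltnNge hx. Qed.

Lemma pactM p q x : pact (p * q) x = pact q (pact p x).
Proof.
case: (ltnP x n) => hx; last by rewrite !pact_out.
by have -> : x = Ordinal hx by []; rewrite !pact_ord permM.
Qed.

Lemma pact1 x : pact 1 x = x.
Proof.
case: (ltnP x n) => hx; last by rewrite pact_out.
by have -> : x = Ordinal hx by []; rewrite pact_ord perm1.
Qed.

Lemma pact_lt p x : x < n -> pact p x < n.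
Proof. by move=> hx; have -> : x = Ordinal hx by []; rewrite pact_ord. Qed.

Lemma preimK p : cancel (pact p) (preim p).
Proof. by move=> x; rewrite /preim -pactM mulgV pact1. Qed.

Lemma pactK p : cancel (preim p) (pact p).
Proof. by move=> x; rewrite /preim -pactM mulVg pact1. Qed.

Lemma pact_inj p : injective (pact p).
Proof. exact: can_inj (preimK p). Qed.

Lemma preim_inj p : injective (preim p).
Proof. exact: can_inj (pactK p). Qed.

Lemma preim_lt p x : x < n -> preim p x < n.
Proof. exact: pact_lt. Qed.

Lemma eq_perm_pact p q : (forall x, x < n -> pact p x = pact q x) -> p = q.
Proof.
by move=> e; apply/permP => o; apply: val_inj; have := e o (ltn_ord o); rewrite !pact_ord.
Qed.

Definition adjn a : {perm 'I_n} := if insub a is Some o then adj_tr o else 1.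

Lemma adjn_ord (o : 'I_n) : adjn o = adj_tr o.
Proof. by rewrite /adjn valK. Qed.

Lemma pact_adjn a x : a < n -> pact (adjn a) x = nswap a x.
Proof.
move=> ha; case: (ltnP x n) => hx; last by rewrite pact_out //; nswap_lia.
have -> : x = Ordinal hx by []; have -> : a = Ordinal ha by [].
by rewrite adjn_ord pact_ord adj_trE.
Qed.

Lemma adjnV a : (adjn a)^-1 = adjn a.
Proof.
rewrite /adjn; case: insub => [o|]; last exact: invg1.
by rewrite /adj_tr; case: ifP => _; [exact: tpermV | exact: invg1].
Qed.

Lemma mul_adjnK p a : p * adjn a * adjn a = p.
Proof. by rewrite -mulgA -{1}adjnV mulVg mulg1. Qed.

Lemma preim_mul_adjn p a x : a < n -> preim (p * adjn a) x = preim p (nswap a x).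
Proof. by move=> ha; rewrite /preim invMg adjnV pactM pact_adjn. Qed.

Lemma adjn_comm a b : a < n -> b < n -> a.+1 < b \/ b.+1 < a ->
  adjn a * adjn b = adjn b * adjn a.
Proof.
by move=> ha hb hab; apply: eq_perm_pact => x _; rewrite !pactM !pact_adjn //; nswap_lia.
Qed.

Lemma adjn_braid a : 0 < a -> a.+1 < n ->
  adjn a * adjn a.+1 * adjn a = adjn a.+1 * adjn a * adjn a.+1.
Proof.
move=> a0 ha; have ha' : a < n by lia.
by apply: eq_perm_pact => x _; rewrite !pactM !pact_adjn //; nswap_lia.
Qed.

(* [preim p a] is the position of the value [a] in the one-line notation of [p];
   right multiplication by [adjn a] exchanges the values [a.-1] and [a]. *)
Definition inversion p x y := [&& x < y, y < n & pact p y < pact p x].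
Definition ninv p := #|[set o : 'I_n * 'I_n | inversion p o.1 o.2]|.
Definition descent p a := preim p a < preim p a.-1.

Lemma ascentE p a : 0 < a -> (preim p a.-1 < preim p a) = ~~ descent p a.
Proof.
move=> a0; have ne : (a == a.-1) = false by apply/eqP; lia.
by rewrite /descent ltnNge leq_eqVlt (inj_eq (@preim_inj p)) ne.
Qed.

Lemma inversion_mul_adjn p a x y : 0 < a < n -> preim p a.-1 < preim p a ->
  inversion (p * adjn a) x y = inversion p x y || (x == preim p a.-1) && (y == preim p a).
Proof.
move=> /andP[a0 an] up; rewrite /inversion !pactM !pact_adjn //.
case: (x =P preim p a.-1) => hx; case: (y =P preim p a) => hy /=.
- by subst; rewrite !pactK up preim_lt //=; nswap_lia.
all: case: (ltnP x y) => //= hxy; case: (ltnP y n) => //= hyn.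
all: have ne : pact p y <> pact p x by move/pact_inj; lia.
all: have c1 : ~ (pact p y = a.-1 /\ pact p x = a)
       by case=> /(congr1 (preim p)) + /(congr1 (preim p)); rewrite !preimK; lia.
all: have c2 : ~ (pact p y = a /\ pact p x = a.-1)
       by case=> /(congr1 (preim p)) + /(congr1 (preim p)); rewrite !preimK => ? ?; subst.
all: by rewrite nswap_mono // orbF.
Qed.

Lemma ninv_mul_adjn_up p a : 0 < a < n -> preim p a.-1 < preim p a ->
  ninv (p * adjn a) = (ninv p).+1.
Proof.
move=> ha up; have /andP[a0 an] := ha; have a1n : a.-1 < n by lia.
pose o := (p^-1 (Ordinal a1n), p^-1 (Ordinal an)).
have eo : (val o.1, val o.2) = (preim p a.-1, preim p a) by rewrite /preim /= -!pact_ord.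
rewrite /ninv (_ : [set o | _] = o |: [set o : 'I_n * 'I_n | inversion p o.1 o.2]).
  rewrite cardsU1 inE /inversion; case: eo => -> ->; rewrite !pactK.
  by rewrite (_ : (a < a.-1) = false) ?andbF //; lia.
apply/setP => -[x y]; rewrite !inE /= inversion_mul_adjn // xpair_eqE orbC.
by case: eo => <- <-; rewrite !val_eqE.
Qed.

Lemma ninv_mul_adjn_down p a : 0 < a < n -> descent p a ->
  (ninv (p * adjn a)).+1 = ninv p.
Proof.
move=> ha hd; have /andP[a0 an] := ha.
rewrite -[in RHS](mul_adjnK p a) (@ninv_mul_adjn_up (p * adjn a)) // !preim_mul_adjn //.
by move: hd; rewrite /descent; nswap_cases; lia.
Qed.

Lemma ninv_mul_adjn_le p a : 0 < a < n -> ninv (p * adjn a) <= (ninv p).+1.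
Proof.
move=> ha; have /andP[a0 _] := ha.
case up: (preim p a.-1 < preim p a); first by rewrite ninv_mul_adjn_up.
by rewrite ascentE // in up; rewrite -(ninv_mul_adjn_down ha (negbFE up)); lia.
Qed.

Lemma ninv1 : ninv 1 = 0.
Proof.
apply: eq_card0 => o; rewrite !inE /inversion !pact1.
by apply/negP => /and3P[]; lia.
Qed.

Lemma ascents_perm1 p : (forall a, 0 < a < n -> preim p a.-1 < preim p a) -> p = 1.
Proof.
move=> up.
have ge x : x < n -> x <= preim p x.
  by elim: x => // x IH hx; have /= := up x.+1 hx; have := IH (ltnW hx); lia.
have le x : x < n -> preim p x <= x.
  have [k] := ubnP (n - x); elim: k x => // k IH x hk hx.
  case: (ltnP x.+1 n) => hx1; last by have := preim_lt p hx; lia.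
  by have := IH x.+1 ltac:(lia) hx1; have /= := up x.+1 hx1; lia.
apply/eqP; rewrite -invg_eq1; apply/eqP/eq_perm_pact => x hx.
by rewrite pact1; apply/eqP; rewrite eqn_leq le // ge.
Qed.

Lemma exists_descent p : p != 1 -> exists2 a, 0 < a < n & descent p a.
Proof.
move=> hp; case/boolP: [exists a : 'I_n, (0 < a) && descent p a].
  by case/existsP=> a /andP[a0 hd]; exists a; rewrite ?a0 ?ltn_ord.
move/existsPn=> none; case/eqP: hp; apply: ascents_perm1 => a /andP[a0 an].
by rewrite ascentE //; have := none (Ordinal an); rewrite /= a0.
Qed.

Definition wprod u := \prod_(i <- u) adjn i.
Definition valid u := all (fun i => 0 < i < n) u.
Definition reduced w u := [/\ valid u, wprod u = w & size u = ninv w].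

Lemma wprod_cons a u : wprod (a :: u) = adjn a * wprod u.
Proof. exact: big_cons. Qed.

Lemma wprod_rcons u a : wprod (rcons u a) = wprod u * adjn a.
Proof. exact: big_rcons. Qed.

Lemma wprod_cat u v : wprod (u ++ v) = wprod u * wprod v.
Proof. exact: big_cat. Qed.

Lemma ninv_mul_wprod p u : valid u -> ninv (p * wprod u) <= ninv p + size u.
Proof.
elim: u p => [|a u IH] p /=; first by rewrite /wprod big_nil mulg1 addn0.
case/andP=> ha hu; have -> : p * wprod (a :: u) = p * adjn a * wprod u.
  by rewrite wprod_cons mulgA.
by have := IH (p * adjn a) hu; have := ninv_mul_adjn_le p ha; lia.
Qed.

Lemma reduced_rcons w u a : 0 < a < n -> descent w a ->
  reduced (w * adjn a) u -> reduced w (rcons u a).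
Proof.
move=> ha hd [hu hp hs]; split.
- by rewrite /valid all_rcons ha.
- by rewrite wprod_rcons hp mul_adjnK.
- by rewrite size_rcons hs ninv_mul_adjn_down.
Qed.

Lemma reduced_rconsE w u a : reduced w (rcons u a) ->
  [/\ 0 < a < n, descent w a & reduced (w * adjn a) u].
Proof.
case; rewrite /valid all_rcons size_rcons => /andP[ha hu] hp hs.
have /andP[a0 _] := ha.
have ew : w * adjn a = wprod u by rewrite -hp wprod_rcons mul_adjnK.
have le_u : ninv (wprod u) <= size u.
  by have := ninv_mul_wprod 1 hu; rewrite mul1g ninv1.
have le_w : ninv w <= (ninv (wprod u)).+1 by rewrite -hp wprod_rcons ninv_mul_adjn_le.
have hd : descent w a.
  rewrite -[descent _ _]negbK -ascentE //; apply/negP => up.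
  by have := ninv_mul_adjn_up ha up; rewrite ew; lia.
by split=> //; split=> //; rewrite ew //; lia.
Qed.

Lemma exists_reduced w : exists u, reduced w u.
Proof.
have [k] := ubnP (ninv w); elim: k w => // k IH w hk.
have [->|hw] := eqVneq w 1; first by exists [::]; rewrite /reduced ninv1 /wprod big_nil.
have [a ha hd] := exists_descent hw.
have [u hu] := IH (w * adjn a) ltac:(have := ninv_mul_adjn_down ha hd; lia).
by exists (rcons u a); apply: reduced_rcons.
Qed.

(* The letter [a] applied after [p] creates or removes the inversion between the
   positions of the values [a.-1] and [a]. *)
Fixpoint invseq p u : seq (nat * nat) :=
  if u is a :: u' then (preim p a.-1, preim p a) :: invseq (p * adjn a) u' else [::].

Lemma invseq_cat p u v : invseq p (u ++ v) = invseq p u ++ invseq (p * wprod u) v.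
Proof.
elim: u p => [|a u IH] p /=; first by rewrite /wprod big_nil mulg1.
by rewrite IH wprod_cons mulgA.
Qed.

Lemma invseq_inj p u v : invseq p u = invseq p v -> u = v.
Proof.
by elim: u p v => [|a u IH] p [|b v] //= [_ /preim_inj <- /IH ->].
Qed.

Lemma invseq_fresh p u : valid u -> ninv (p * wprod u) = ninv p + size u ->
  uniq (invseq p u) && all (fun xy => ~~ inversion p xy.1 xy.2) (invseq p u).
Proof.
elim: u p => [|a u IH] p //=; case/andP=> ha hu.
have -> : p * wprod (a :: u) = p * adjn a * wprod u by rewrite wprod_cons mulgA.
move=> hL; have /andP[a0 _] := ha.
have le1 := ninv_mul_adjn_le p ha; have le2 := ninv_mul_wprod (p * adjn a) hu.
have up : preim p a.-1 < preim p a.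
  by rewrite ascentE //; apply/negP => /(ninv_mul_adjn_down ha); lia.
have /andP[hU hA] := IH (p * adjn a) hu ltac:(lia).
have inv_a : inversion (p * adjn a) (preim p a.-1) (preim p a).
  by rewrite inversion_mul_adjn // !eqxx orbT.
apply/and3P; split.
- by rewrite hU andbT; apply/negP => /(allP hA) /=; rewrite inv_a.
- by rewrite /inversion !pactK; apply/negP => /and3P[_ _]; lia.
- by apply/allP => xy /(allP hA); rewrite inversion_mul_adjn //; apply: contra => ->.
Qed.

Lemma reduced_invseq_uniq w u : reduced w u -> uniq (invseq 1 u).
Proof.
case=> hv hp hs.
have hL : ninv (1 * wprod u) = ninv 1 + size u by rewrite mul1g ninv1 hp hs.
by case/andP: (invseq_fresh hv hL).
Qed.

Lemma valid_mem u a : valid u -> a \in u -> 0 < a < n.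
Proof. by move/allP; apply. Qed.

Lemma valid_ltn u : valid u -> all (gtn n) u.
Proof. by move=> hv; apply/allP => a /(valid_mem hv) /andP[]. Qed.

Lemma braid_window p X Y i : 0 < i -> i.+1 < n ->
  wprod (X ++ [:: i; i.+1; i] ++ Y) = wprod (X ++ [:: i.+1; i; i.+1] ++ Y) /\
  same_order (fun x y => ~~ incident x y)
    (invseq p (X ++ [:: i; i.+1; i] ++ Y)) (invseq p (X ++ [:: i.+1; i; i.+1] ++ Y)).
Proof.
move=> i0 i1n; have i_n : i < n by lia.
have eW : wprod [:: i; i.+1; i] = wprod [:: i.+1; i; i.+1].
  by rewrite /wprod !big_cons big_nil !mulg1 !mulgA adjn_braid.
split; first by rewrite !wprod_cat eW.
rewrite !invseq_cat eW /= !preim_mul_adjn //.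
have [e1 e2] : nswap i i.+1 = i.+1 /\ nswap i.+1 i.-1 = i.-1 by split; nswap_lia.
do 2 rewrite ?e1 ?e2 ?nswap_self ?nswap_pred /=.
set q := p * wprod X; set A := preim q i.-1; set B := preim q i; set C := preim q i.+1.
have hW : {in [:: (A, B); (A, C); (B, C)] &, forall x y, ~~ incident x y -> x = y}.
  move=> x y; rewrite !inE => /or3P[]/eqP-> /or3P[]/eqP->;
  by rewrite /incident /= !eqxx ?orbT.
exact: (same_order_cat_rev (invseq p X) _ hW).
Qed.

Lemma comm_window p X Y i j : 0 < i < n -> 0 < j < n -> i.+1 < j \/ j.+1 < i ->
  wprod (X ++ [:: i; j] ++ Y) = wprod (X ++ [:: j; i] ++ Y) /\
  same_order incident (invseq p (X ++ [:: i; j] ++ Y)) (invseq p (X ++ [:: j; i] ++ Y)).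
Proof.
move=> /andP[i0 i_n] /andP[j0 j_n] hij; have hji : j.+1 < i \/ i.+1 < j by tauto.
have eW : wprod [:: i; j] = wprod [:: j; i].
  by rewrite /wprod !big_cons big_nil !mulg1 adjn_comm.
split; first by rewrite !wprod_cat eW.
rewrite !invseq_cat eW /= !preim_mul_adjn //.
have [-> ->] := nswap_far hij; have [-> ->] := nswap_far hji.
set q := p * wprod X.
have hW : {in [:: (preim q i.-1, preim q i); (preim q j.-1, preim q j)] &,
           forall x y, incident x y -> x = y}.
  move=> x y; rewrite !inE => /orP[]/eqP-> /orP[]/eqP-> hxy //; move: hxy;
  by rewrite /incident /= !(inj_eq (@preim_inj q)); case/or4P => /eqP; lia.
exact: (same_order_cat_rev (invseq p X) _ hW).
Qed.

Lemma braid_move_spec u v : braid_move u v -> valid u ->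
  wprod u = wprod v /\
  forall p, same_order (fun x y => ~~ incident x y) (invseq p u) (invseq p v).
Proof.
case=> X [Y [i hXY]] hu.
have [hi hi1] : i \in u /\ i.+1 \in u.
  by case: hXY => -[-> _]; rewrite !mem_cat !inE !eqxx !orbT.
have /andP[i0 _] := valid_mem hu hi; have /andP[_ i1n] := valid_mem hu hi1.
have [eW _] := braid_window 1 X Y i0 i1n.
case: hXY => -[-> ->]; split=> [|p]; rewrite ?eW //.
all: have [_ hO] := braid_window p X Y i0 i1n.
all: first [exact: hO | exact: same_order_sym hO].
Qed.

Lemma comm_move_spec u v : comm_move u v -> valid u ->
  wprod u = wprod v /\ forall p, same_order incident (invseq p u) (invseq p v).
Proof.
case=> X [Y [i [j [hij [-> ->]]]]] hu.
have hi : 0 < i < n by apply: (valid_mem hu); rewrite !mem_cat !inE eqxx !orbT.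
have hj : 0 < j < n by apply: (valid_mem hu); rewrite !mem_cat !inE eqxx !orbT.
split=> [|p]; first by case: (comm_window 1 X Y hi hj hij).
by case: (comm_window p X Y hi hj hij).
Qed.

Lemma move_valid u v : move u v -> valid u = valid v.
Proof. by move/move_mem/eq_all_r; apply. Qed.

Lemma move_wprod u v : move u v -> valid u -> wprod u = wprod v.
Proof. by case=> h hu; [case: (braid_move_spec h hu) | case: (comm_move_spec h hu)]. Qed.

Lemma move_reduced w u v : move u v -> reduced w u <-> reduced w v.
Proof.
suff imp u' v' : move u' v' -> reduced w u' -> reduced w v'.
  by move=> h; split; apply: imp => //; apply: move_sym.
move=> hm [hu hp hs]; split.
- by rewrite -(move_valid hm).
- by rewrite -(move_wprod hm hu).
- by rewrite -(move_size hm).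
Qed.

Lemma braid_moves_invseq p u v : moves braid_move u v -> valid u ->
  same_order (fun x y => ~~ incident x y) (invseq p u) (invseq p v).
Proof.
apply: (@crst_equiv_ind _ _ _ (fun u => valid u) _ (invseq p) _ (same_order_equiv _)).
- by move=> x y h; rewrite (move_valid (or_introl h)).
- by move=> x y h hx; case: (braid_move_spec h hx) => _; apply.
Qed.

Lemma comm_moves_invseq p u v : moves comm_move u v -> valid u ->
  same_order incident (invseq p u) (invseq p v).
Proof.
apply: (@crst_equiv_ind _ _ _ (fun u => valid u) _ (invseq p) _ (same_order_equiv _)).
- by move=> x y h; rewrite (move_valid (or_intror h)).
- by move=> x y h hx; case: (comm_move_spec h hx) => _; apply.
Qed.

Lemma descent_comm w a b : a < n -> a.+1 < b \/ b.+1 < a ->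
  descent w b -> descent (w * adjn a) b.
Proof.
by move=> an hab; rewrite /descent !preim_mul_adjn //; have [-> ->] := nswap_far hab.
Qed.

Lemma descent_braid w a : 0 < a -> a.+1 < n -> descent w a -> descent w a.+1 ->
  [/\ descent (w * adjn a) a.+1, descent (w * adjn a * adjn a.+1) a,
      descent (w * adjn a.+1) a & descent (w * adjn a.+1 * adjn a) a.+1].
Proof.
move=> a0 a1n; have an : a < n by lia.
rewrite /descent !preim_mul_adjn //=.
have [e1 e2] : nswap a a.+1 = a.+1 /\ nswap a.+1 a.-1 = a.-1 by split; nswap_lia.
do 2 rewrite ?e1 ?e2 ?nswap_self ?nswap_pred /=.
by move=> da da1; split; lia.
Qed.

Lemma moves_rcons u v a : moves move u v -> moves move (rcons u a) (rcons v a).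
Proof. by apply: (crst_map (f := rcons^~ a)) => x y; apply: move_rcons. Qed.

Section Step.
Variable k : nat.
Hypothesis IH : forall w u v, ninv w < k -> reduced w u -> reduced w v -> moves move u v.

Lemma moves_same_last w u v a : ninv w <= k ->
  reduced w (rcons u a) -> reduced w (rcons v a) -> moves move (rcons u a) (rcons v a).
Proof.
move=> hk hu hv; have [ha hd hu'] := reduced_rconsE hu; have [_ _ hv'] := reduced_rconsE hv.
apply/moves_rcons/(IH _ hu' hv'); have := ninv_mul_adjn_down ha hd; lia.
Qed.

(* The last letters of the two words are descents of w, so w also has reduced
   words ending in [b a] and [a b] (resp. [a a.+1 a] and [a.+1 a a.+1]): these
   are one move apart, and each shares its last letter with one given word. *)
Lemma moves_comm_last w u v a b : ninv w <= k -> a.+1 < b \/ b.+1 < a ->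
  reduced w (rcons u a) -> reduced w (rcons v b) -> moves move (rcons u a) (rcons v b).
Proof.
move=> hk hab hu hv; have hba : b.+1 < a \/ a.+1 < b by tauto.
have [ha hda _] := reduced_rconsE hu; have [hb hdb _] := reduced_rconsE hv.
have [an bn] : a < n /\ b < n by case/andP: ha; case/andP: hb.
have ec : w * adjn a * adjn b = w * adjn b * adjn a by rewrite -!mulgA adjn_comm.
have [r hr] := exists_reduced (w * adjn a * adjn b).
have ra : reduced w (rcons (rcons r b) a).
  by apply: reduced_rcons (ha) hda _; apply: reduced_rcons (hb) (descent_comm an hab hdb) hr.
have rb : reduced w (rcons (rcons r a) b).
  apply: reduced_rcons (hb) hdb _; apply: reduced_rcons (ha) (descent_comm bn hba hda) _.
  by rewrite -ec.
apply: rst_trans (moves_same_last hk hu ra) _; apply: rst_trans _ (moves_same_last hk rb hv).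
by apply: rst_step; right; exists r, [::], b, a; rewrite -!cats1 -!catA.
Qed.

Lemma moves_braid_last w u v a : ninv w <= k ->
  reduced w (rcons u a) -> reduced w (rcons v a.+1) -> moves move (rcons u a) (rcons v a.+1).
Proof.
move=> hk hu hv.
have [ha hda _] := reduced_rconsE hu; have [hb hdb _] := reduced_rconsE hv.
have a0 : 0 < a by case/andP: ha.
have a1n : a.+1 < n by case/andP: hb.
have [d1 d2 d3 d4] := descent_braid a0 a1n hda hdb.
have eb : w * adjn a * adjn a.+1 * adjn a = w * adjn a.+1 * adjn a * adjn a.+1.
  by have := congr1 (fun q => w * q) (adjn_braid a0 a1n); rewrite !mulgA.
have [r hr] := exists_reduced (w * adjn a * adjn a.+1 * adjn a).
have ru : reduced w (rcons (rcons (rcons r a) a.+1) a).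
  apply: reduced_rcons (ha) hda _; apply: reduced_rcons (hb) d1 _.
  exact: reduced_rcons (ha) d2 hr.
have rv : reduced w (rcons (rcons (rcons r a.+1) a) a.+1).
  apply: reduced_rcons (hb) hdb _; apply: reduced_rcons (ha) d3 _.
  by apply: reduced_rcons (hb) d4 _; rewrite -eb.
apply: rst_trans (moves_same_last hk hu ru) _; apply: rst_trans _ (moves_same_last hk rv hv).
by apply: rst_step; left; exists r, [::], a; left; rewrite -!cats1 -!catA.
Qed.

Lemma moves_reduced_step w u v :
  ninv w <= k -> reduced w u -> reduced w v -> moves move u v.
Proof.
move=> hk; case/lastP: u => [|u a] hu; case/lastP: v => [|v b] hv.
- exact: rst_refl.
- by case: hu hv => _ _ h0 [_ _]; rewrite size_rcons -h0.
- by case: hu hv => _ _ h0 [_ _ h1]; move: h0; rewrite -h1 size_rcons.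
have [lt_ab|lt_ba|eab] := ltngtP a b.
- case: (ltnP a.+1 b) => h; first exact: moves_comm_last hk (or_introl h) hu hv.
  have eb : b = a.+1 by lia.
  by subst b; exact: moves_braid_last hk hu hv.
- case: (ltnP b.+1 a) => h; first exact: moves_comm_last hk (or_intror h) hu hv.
  have ea : a = b.+1 by lia.
  by subst a; apply: rst_sym; exact: moves_braid_last hk hv hu.
- by subst b; exact: moves_same_last hk hu hv.
Qed.

End Step.

Theorem matsumoto w u v : reduced w u -> reduced w v -> moves move u v.
Proof.
have [k] := ubnP (ninv w); elim: k w u v => // k IH w u v hk.
by rewrite ltnS in hk; apply: (@moves_reduced_step k IH).
Qed.

Lemma word_prodE (t : seq 'I_n) : word_prod t = wprod (map val t).
Proof. by rewrite /word_prod /wprod big_map; apply: eq_bigr => o _; rewrite adjn_ord. Qed.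

Lemma valid_wordE (t : seq 'I_n) : valid_word t = valid (map val t).
Proof. by elim: t => //= a t ->; rewrite ltn_ord andbT. Qed.

Lemma exists_tuple_ord k (s : seq nat) : size s = k -> all (gtn n) s ->
  exists t : k.-tuple 'I_n, map val t = s.
Proof.
elim: s k => [|a s IH] [|k] //=; first by exists [tuple].
case=> hk /andP[ha hs]; have [t ht] := IH k hk hs.
by exists [tuple of Ordinal ha :: t]; rewrite /= ht.
Qed.

Lemma perm_lengthE w : perm_length w = ninv w.
Proof.
have [u [hv hp hs]] := exists_reduced w.
have [t ht] : exists t : (ninv w).-tuple 'I_n, map val t = u.
  exact: exists_tuple_ord hs (valid_ltn hv).
have hw : has_word_of_length w (ninv w).
  by apply/existsP; exists t; rewrite valid_wordE word_prodE ht hv hp eqxx.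
rewrite /perm_length; case: excluded_middle_informative => [h|[]]; last by exists (ninv w).
case: ex_minnP => m /existsP[t' /andP[hv' /eqP hp']] /(_ _ hw) hmin.
rewrite valid_wordE in hv'; rewrite word_prodE in hp'.
have := ninv_mul_wprod 1 hv'; rewrite mul1g ninv1 hp' size_map size_tuple /=; lia.
Qed.

Lemma reduced_moves_eq w u v : reduced w u -> reduced w v ->
  moves braid_move u v -> moves comm_move u v -> u = v.
Proof.
move=> hu hv hb hc; have [vu _ _] := hu.
have [hperm hB] := braid_moves_invseq 1 hb vu.
have [_ hC] := comm_moves_invseq 1 hc vu.
apply: (@invseq_inj 1).
apply: eq_from_before (reduced_invseq_uniq hu) (reduced_invseq_uniq hv) (perm_mem hperm) _.
by move=> x y; case: (boolP (incident x y)) => h; [exact: hC | exact: hB].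
Qed.

End Permutations.

Section ReducedWords.
Variables (n : nat) (w : {perm 'I_n}).
Local Notation T := ((perm_length w).-tuple 'I_n).
Local Notation R := (reduced_words w).

Lemma mem_reduced_words (t : T) : t \in R <-> reduced w (map val t).
Proof.
rewrite inE valid_wordE word_prodE; split.
- by case/andP=> hv /eqP hp; split=> //; rewrite size_map size_tuple perm_lengthE.
- by case=> hv hp _; rewrite hv hp eqxx.
Qed.

Lemma reduced_tuple u : reduced w u -> exists2 t : T, t \in R & map val t = u.
Proof.
move=> hu; have [hv _ hs] := hu; rewrite -perm_lengthE in hs.
have [t ht] := exists_tuple_ord hs (valid_ltn hv).
by exists t => //; apply/mem_reduced_words; rewrite ht.
Qed.

Definition move_class (mv : seq nat -> seq nat -> Prop) (t : T) : {set T} :=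
  [set u in R | pbool (moves mv (map val t) (map val u))].

Lemma move_class_moves mv (t u : T) : u \in R ->
  move_class mv t = move_class mv u -> moves mv (map val t) (map val u).
Proof.
move=> Ru e; have : u \in move_class mv u by rewrite inE Ru; apply/pboolP/rst_refl.
by rewrite -e inE => /andP[_ /pboolP].
Qed.

Lemma move_class_step mv (t u : T) : mv (map val t) (map val u) ->
  move_class mv t = move_class mv u.
Proof.
move=> h; apply/setP => x; rewrite !inE; congr (_ && _); apply/pboolP/pboolP => hx.
- exact: rst_trans (rst_sym _ _ _ _ (rst_step _ _ _ _ h)) hx.
- exact: rst_trans (rst_step _ _ _ _ h) hx.
Qed.

Lemma move_classes_inj : {in R &, forall t u,
  move_class braid_move t = move_class braid_move u ->
  move_class comm_move t = move_class comm_move u -> t = u}.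
Proof.
move=> t u Rt Ru eb ec; apply/val_inj/(inj_map val_inj).
apply: (@reduced_moves_eq n w); try exact/mem_reduced_words.
all: exact: move_class_moves.
Qed.

(* Matsumoto's chain of moves from a word in S to a word outside S has a step
   leaving S. *)
Lemma reduced_words_cut (S : {set T}) : S \proper R -> S != set0 ->
  exists2 x, x \in S & exists2 y, y \in R :\: S &
    move_class braid_move x = move_class braid_move y \/
    move_class comm_move x = move_class comm_move y.
Proof.
case/properP=> sSR [y Ry nSy] /set0Pn[x0 Sx0].
pose Q s := [exists t in S, map val t == s].
have Qx0 : Q (map val x0) by apply/existsP; exists x0; rewrite Sx0 eqxx.
have nQy : ~~ Q (map val y).
  apply/existsP => -[t /andP[St /eqP/(inj_map val_inj)/val_inj ety]].
  by rewrite -ety St in nSy.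
have hx0 : reduced w (map val x0) by apply/mem_reduced_words/(subsetP sSR).
have hy : reduced w (map val y) by apply/mem_reduced_words.
have [c [d [/existsP[t /andP[St /eqP ec]] nQd hcd]]] :=
  crst_cut (matsumoto hx0 hy) Qx0 nQy.
have {}hcd : move c d by case: hcd => // /move_sym.
have hd : reduced w d.
  by apply/(move_reduced _ hcd); rewrite -ec; apply/mem_reduced_words/(subsetP sSR).
have [y1 Ry1 ey1] := reduced_tuple hd.
exists t => //; exists y1.
  rewrite inE Ry1 andbT; apply: contra nQd => Sy1.
  by apply/existsP; exists y1; rewrite Sy1 ey1 eqxx.
by rewrite -ec -ey1 in hcd; case: hcd => h; [left | right]; apply: move_class_step.
Qed.

End ReducedWords.

Theorem theorem4p6 (n : nat) (w : {perm 'I_n}) :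
  #|braid_classes w| + #|comm_classes w| - 1 <= #|reduced_words w|
  <= #|braid_classes w| * #|comm_classes w|.
Proof.
apply/andP; split.
- by rewrite leq_subLR add1n; apply: card_imset_add_le; exact: reduced_words_cut.
- by apply: card_le_imset_mul; exact: move_classes_inj.
Qed.
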